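(* Let $(p,q)=(6/5,2)$. Then for every $x \in [0,\pi_{6/5,2}/2]$, \[ \sin_{6/5,2}{(2x)} =\sqrt{1-\left(\frac{9-8\sin_{6/5,2}^2{x}-4\sin_{6/5,2}^2{x}\,\cos_{6/5,2}^{2/5}{x}} {9-8\sin_{6/5,2}^2{x}+8\sin_{6/5,2}^2{x}\,\cos_{6/5,2}^{2/5}{x}}\right)^3}. \]
   Context: For $1<p,q<\infty$ let $F_{p,q}(x)=\int_0^x (1-t^q)^{-1/p}\,dt$ for $x\in[0,1]$, and $\pi_{p,q}=2F_{p,q}(1)$. The generalized sine $\sin_{p,q}$ is defined on $[0,\pi_{p,q}/2]$ as the inverse function of $F_{p,q}$ (an increasing function onto $[0,1]$), extended to $(\pi_{p,q}/2,\pi_{p,q}]$ by $\sin_{p,q}x=\sin_{p,q}(\pi_{p,q}-x)$, and to all of $\mathbb{R}$ as an odd $2\pi_{p,q}$-periodic function. It is $C^1$, and the generalized cosine is $\cos_{p,q}x := \frac{d}{dx}\sin_{p,q}x$; it satisfies $|\cos_{p,q}x|^p+|\sin_{p,q}x|^q=1$, and $\cos_{p,q}x\ge 0$ on $[0,\pi_{p,q}/2]$. *)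

From Stdlib Require Import Reals Lra ClassicalEpsilon.
From Coquelicot Require Import Coquelicot.
Open Scope R_scope.

(* Real power x^a for x > 0; set to 0 for x <= 0 (only used where this is
   harmless: at single points of integration, or with a > 0 at x = 0). *)
Definition rpow (x a : R) : R :=
  if Rlt_dec 0 x then Rpower x a else 0.

Definition integrand_pq (p q : R) (t : R) : R :=
  rpow (1 - rpow t q) (- / p).

Definition F_pq (p q : R) (x : R) : R :=
  if Rlt_dec x 1 then RInt (integrand_pq p q) 0 x
  else RInt_gen (integrand_pq p q) (at_point 0) (at_left 1).

Definition pi_pq (p q : R) : R := 2 * F_pq p q 1.

Definition sin_pq_base (p q : R) (x : R) : R :=
  epsilon (inhabits 0) (fun y => 0 <= y <= 1 /\ F_pq p q y = x).

Definition sin_pq_half (p q : R) (x : R) : R :=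
  if Rle_dec x (pi_pq p q / 2) then sin_pq_base p q x
  else sin_pq_base p q (pi_pq p q - x).

(* odd, 2 pi_{p,q}-periodic extension to all of R *)
Definition sin_pq (p q : R) (x : R) : R :=
  let P := pi_pq p q in
  let y := x - 2 * P * IZR (Int_part ((x + P) / (2 * P))) in
  (* y in [-P, P) and y = x mod 2P *)
  if Rle_dec 0 y then sin_pq_half p q y else - sin_pq_half p q (- y).

Definition cos_pq (p q : R) (x : R) : R := Derive (sin_pq p q) x.

(* Write s = sin_{p,q} x and u = cos_{p,q}^{2/5} x = (1 - s^2)^{1/3}.  The substitution
   t = sqrt (1 - v^3) turns x = F_{p,q}(s) into the elliptic integral
   x = G u = 3/2 int_u^1 dv / sqrt (v (1 - v^3)).  The rational map
   dup u = w(u)^2 / D(u), with w = 2u^2 + 2u - 1 and D = -8u^4 + 8u^3 + 8u + 1,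
   is a duplication for this integral: for an explicit quartic K,
   1 - dup(u)^3 = u (1 - u^3) K(u)^2 / D(u)^3 and dup' = 2 w K / D^2, so the chain rule
   gives G (dup u) = 2 G u above the root u_star = (sqrt 3 - 1)/2 of w, and
   G (dup u) = pi_{p,q} - 2 G u below it.  As sin_{p,q} inverts F_{p,q} and is
   symmetric about pi_{p,q}/2, in both cases sin_{p,q} (2x) = sqrt (1 - dup(u)^3),
   which is the claimed formula.
   The analytic input is that F_{p,q} is a continuous increasing bijection
   [0,1] -> [0, pi_{p,q}/2] (the improper integral converges as 5/6 < 1), that
   cos_{p,q} = 1 / F_{p,q}'(sin_{p,q}) inside, and that cos_{p,q} vanishes at pi_{p,q}/2. *)

From Stdlib Require Import Reals Lra Classical ClassicalEpsilon.
From Coquelicot Require Import Coquelicot.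
Open Scope R_scope.

Lemma ex_derive_continuity_pt (f : R -> R) x : ex_derive f x -> continuity_pt f x.
Proof.
  intros Hf. now apply continuity_pt_filterlim, (ex_derive_continuous (V := R_NormedModule)).
Qed.

Lemma MVT_le f df a b : a <= b ->
  (forall x, a < x < b -> is_derive f x (df x)) ->
  (forall x, a <= x <= b -> continuity_pt f x) ->
  exists c, a <= c <= b /\ f b - f a = df c * (b - a).
Proof.
  intros Hab Hd Hc. destruct (MVT_gen f a b df) as [c Hc']; cbv zeta in *;
    rewrite ?Rmin_left, ?Rmax_right in *; eauto.
Qed.

Lemma is_derive_0_eq f a b : a <= b ->
  (forall x, a < x < b -> is_derive f x 0) ->
  (forall x, a <= x <= b -> continuity_pt f x) -> f a = f b.
Proof.
  intros Hab Hd Hc. destruct (MVT_le f (fun _ => 0) a b) as [c [_ E]]; auto. lra.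
Qed.

Lemma is_lub_approx (E : R -> Prop) m eps : is_lub E m -> 0 < eps ->
  exists z, E z /\ m - eps < z.
Proof.
  intros [_ Hmin] Heps. apply NNPP; intros Hno.
  enough (m <= m - eps) by lra.
  apply Hmin; intros z Hz. apply Rnot_lt_le; intros Hlt. eauto.
Qed.

Lemma Rinv_close q d eps : d <> 0 -> 0 < eps ->
  Rabs (q - d) < Rmin (Rabs d / 2) (eps * d ^ 2 / 2) -> Rabs (/ q - / d) < eps.
Proof.
  intros Hd Heps Hq. apply Rmin_Rgt in Hq as [Hq1 Hq2].
  pose proof (Rabs_pos_lt d Hd) as Hd'.
  assert (Hqd : Rabs d / 2 < Rabs q).
  { pose proof (Rabs_triang_inv d q). rewrite Rabs_minus_sym in Hq1. lra. }
  assert (Hq0 : q <> 0) by (intros ->; rewrite Rabs_R0 in Hqd; lra).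
  replace (/ q - / d) with ((d - q) * / (q * d)) by (field; auto).
  rewrite Rabs_mult, Rabs_inv, Rabs_mult, Rabs_minus_sym.
  apply (Rmult_lt_reg_r (Rabs q * Rabs d)); [nra|].
  rewrite Rmult_assoc, Rinv_l by nra.
  assert (0 < eps * (Rabs q - Rabs d / 2) * Rabs d).
  { apply Rmult_lt_0_compat; [apply Rmult_lt_0_compat|]; lra. }
  rewrite <- (pow2_abs d) in Hq2. nra.
Qed.

Lemma is_derive_inverse f g a b x d :
  a < x < b -> (forall z, a < z < b -> f (g z) = z) -> continuity_pt g x ->
  is_derive f (g x) d -> d <> 0 -> is_derive g x (/ d).
Proof.
  intros Hx Hfg Hg Hf Hd. apply is_derive_Reals in Hf. apply is_derive_Reals.
  intros eps Heps.
  assert (Heta : 0 < Rmin (Rabs d / 2) (eps * d ^ 2 / 2)).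
  { pose proof (Rabs_pos_lt d Hd). apply Rmin_pos; [lra|].
    apply Rmult_lt_0_compat; [apply Rmult_lt_0_compat|]; auto. now apply pow2_gt_0. lra. }
  destruct (Hf _ Heta) as [eta Hquot].
  destruct (proj1 (continuity_pt_locally g x) Hg eta) as [delta Hcont].
  assert (Hpos : 0 < Rmin delta (Rmin (x - a) (b - x))).
  { repeat apply Rmin_pos; try apply cond_pos; lra. }
  exists (mkposreal _ Hpos); intros h Hh0 Hh; simpl in Hh.
  apply Rmin_Rgt in Hh as [Hh1 Hh]; apply Rmin_Rgt in Hh as [Hh2 Hh3].
  apply Rabs_def2 in Hh2 as [_ Hh2]; apply Rabs_def2 in Hh3 as [Hh3 _].
  assert (Hxh : a < x + h < b) by lra.
  set (k := g (x + h) - g x).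
  assert (Hk0 : k <> 0).
  { intros Hk. assert (E : f (g (x + h)) = f (g x)) by (unfold k in Hk; f_equal; lra).
    rewrite (Hfg _ Hxh), (Hfg _ Hx) in E. lra. }
  assert (Hk : Rabs k < eta).
  { apply Hcont. change (Rabs (x + h - x) < delta). now replace (x + h - x) with h by ring. }
  specialize (Hquot k Hk0 Hk).
  replace (g x + k) with (g (x + h)) in Hquot by (unfold k; ring).
  rewrite (Hfg _ Hxh), (Hfg _ Hx) in Hquot. replace (x + h - x) with h in Hquot by ring.
  replace (k / h) with (/ (h / k)) by (field; auto).
  now apply Rinv_close.
Qed.

(** * The integral F_{6/5,2} *)

Lemma exp_le x y : x <= y -> exp x <= exp y.
Proof. intros [Hlt|Heq]; [left; now apply exp_increasing|now rewrite Heq]. Qed.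

Definition integrand (t : R) : R := Rpower (1 - t ^ 2) (- (5 / 6)).

Lemma integrand_pq_eq t : 0 <= t < 1 -> integrand_pq (6/5) 2 t = integrand t.
Proof.
  intros Ht. unfold integrand_pq, integrand, rpow.
  replace (- / (6 / 5)) with (- (5 / 6)) by field.
  destruct (Rlt_dec 0 t) as [Ht0|Ht0].
  - rewrite (Rpower_pow 2) by auto. destruct (Rlt_dec 0 (1 - t ^ 2)); [reflexivity|nra].
  - replace t with 0 by lra. destruct (Rlt_dec 0 (1 - 0)); [f_equal; ring|lra].
Qed.

Lemma continuous_integrand t : -1 < t < 1 -> continuous integrand t.
Proof.
  intros Ht. apply (ex_derive_continuous (V := R_NormedModule)).
  unfold integrand, Rpower. auto_derive. nra.
Qed.

Lemma integrand_pos t : 0 < integrand t.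
Proof. apply exp_pos. Qed.

Lemma integrand_ge_1 t : -1 < t < 1 -> 1 <= integrand t.
Proof.
  intros Ht. unfold integrand, Rpower.
  assert (ln (1 - t ^ 2) <= 0) by (rewrite <- ln_1; apply ln_le; nra).
  pose proof (exp_ineq1_le (- (5 / 6) * ln (1 - t ^ 2))). nra.
Qed.

Lemma integrand_le a b : 0 <= a <= b -> b < 1 -> integrand a <= integrand b.
Proof.
  intros Ha Hb. unfold integrand, Rpower. apply exp_le.
  assert (ln (1 - b ^ 2) <= ln (1 - a ^ 2)) by (apply ln_le; nra). lra.
Qed.

Lemma integrand_pow6 t : -1 < t < 1 -> integrand t ^ 6 = / (1 - t ^ 2) ^ 5.
Proof.
  intros Ht. unfold integrand.
  rewrite <- Rpower_pow, Rpower_mult by apply exp_pos.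
  replace (- (5 / 6) * INR 6) with (- INR 5) by (simpl; field).
  rewrite Rpower_Ropp, Rpower_pow by nra. reflexivity.
Qed.

Definition prim (y : R) : R := RInt integrand 0 y.

Lemma prim_0 : prim 0 = 0.
Proof. unfold prim. now rewrite RInt_point. Qed.

Lemma is_RInt_prim y : -1 < y < 1 -> is_RInt integrand 0 y (prim y).
Proof.
  intros Hy. apply (RInt_correct (V := R_CompleteNormedModule)).
  apply (ex_RInt_continuous (V := R_CompleteNormedModule)).
  intros z Hz. apply continuous_integrand.
  assert (-1 < Rmin 0 y) by (apply Rmin_glb_lt; lra).
  assert (Rmax 0 y < 1) by (apply Rmax_lub_lt; lra). lra.
Qed.

Lemma is_derive_prim y : -1 < y < 1 -> is_derive prim y (integrand y).
Proof.
  intros Hy. apply (is_derive_RInt _ _ 0).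
  - apply (locally_interval _ y (-1) 1); simpl; try lra.
    intros z Hz1 Hz2. now apply is_RInt_prim.
  - now apply continuous_integrand.
Qed.

Lemma prim_increment_ge a b : 0 <= a <= b -> b < 1 ->
  (b - a) * integrand a <= prim b - prim a.
Proof.
  intros Ha Hb.
  destruct (MVT_le prim integrand a b) as [c [Hc E]]; try lra.
  - intros x Hx. apply is_derive_prim. lra.
  - intros x Hx. apply ex_derive_continuity_pt; eexists; apply is_derive_prim. lra.
  - rewrite E. pose proof (integrand_le a c). nra.
Qed.

Lemma prim_increment_ge_length a b : 0 <= a <= b -> b < 1 -> b - a <= prim b - prim a.
Proof.
  intros Ha Hb. pose proof (prim_increment_ge a b Ha Hb). pose proof (integrand_ge_1 a). nra.
Qed.

(* [prim + 6 (1 - t)^(1/6)] is nonincreasing, because [1 - t^2 >= 1 - t]. *)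
Lemma prim_le_6 y : 0 <= y < 1 -> prim y <= 6.
Proof.
  intros Hy. set (h t := prim t + 6 * Rpower (1 - t) (/ 6)).
  destruct (MVT_le h (fun t => integrand t - Rpower (1 - t) (- (5 / 6))) 0 y)
    as [c [Hc E]]; try lra.
  - intros x Hx. unfold h. apply (is_derive_plus prim).
    + apply is_derive_prim. lra.
    + unfold Rpower. auto_derive; [lra|]. replace (1 + - x) with (1 - x) by ring.
      replace (- (5 / 6) * ln (1 - x)) with (/ 6 * ln (1 - x) + - ln (1 - x)) by field.
      rewrite exp_plus, exp_Ropp, exp_ln by lra. field. lra.
  - intros x Hx. apply continuity_pt_plus.
    + apply ex_derive_continuity_pt; eexists; apply is_derive_prim. lra.
    + apply ex_derive_continuity_pt. unfold Rpower. auto_derive. lra.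
  - assert (integrand c <= Rpower (1 - c) (- (5 / 6))).
    { unfold integrand, Rpower. apply exp_le.
      assert (ln (1 - c) <= ln (1 - c ^ 2)) by (apply ln_le; nra). lra. }
    assert ((integrand c - Rpower (1 - c) (- (5 / 6))) * (y - 0) <= 0) by nra.
    unfold h, Rpower in *. rewrite prim_0, Rminus_0_r, ln_1, Rmult_0_r, exp_0 in E.
    pose proof (exp_pos (/ 6 * ln (1 - y))). lra.
Qed.

Definition prim_values (z : R) : Prop := exists y, 0 <= y < 1 /\ z = prim y.

Definition L : R := F_pq (6/5) 2 1.

Lemma is_RInt_gen_integrand_pq m : is_lub prim_values m ->
  is_RInt_gen (integrand_pq (6/5) 2) (at_point 0) (at_left 1) m.
Proof.
  intros Hm. apply (filterlimi_lim_ext_loc (fun ab : R * R => prim (snd ab))).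
  - apply (Filter_prod _ _ _ (fun a => a = 0) (fun b => 0 < b < 1)); [reflexivity| |].
    + apply (locally_interval _ 1 0 p_infty); simpl; try lra; auto.
    + intros a b -> Hb; simpl. apply (is_RInt_ext integrand).
      * intros t Ht. rewrite Rmin_left, Rmax_right in Ht by lra.
        symmetry; apply integrand_pq_eq; lra.
      * apply is_RInt_prim; lra.
  - apply filterlim_locally; intros eps.
    destruct (is_lub_approx _ m eps Hm (cond_pos eps)) as [z [[y0 [Hy0 ->]] Hz]].
    apply (Filter_prod _ _ _ (fun _ => True) (fun b => y0 < b < 1)); [exact I| |].
    + apply (locally_interval _ 1 y0 p_infty); simpl; try lra; auto.
    + intros a b _ Hb. change (Rabs (prim b - m) < eps).
      pose proof (prim_increment_ge_length y0 b ltac:(lra) ltac:(lra)).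
      assert (prim b <= m) by (apply Hm; exists b; split; [lra|reflexivity]).
      apply Rabs_def1; lra.
Qed.

Lemma is_lub_L : is_lub prim_values L.
Proof.
  destruct (completeness prim_values) as [m Hm].
  - exists 6. intros z [y [Hy ->]]. now apply prim_le_6.
  - exists (prim 0), 0. split; [lra|reflexivity].
  - unfold L, F_pq. destruct (Rlt_dec 1 1); [lra|].
    now rewrite (is_RInt_gen_unique _ m (is_RInt_gen_integrand_pq m Hm)).
Qed.

Lemma prim_le_L y : 0 <= y < 1 -> prim y <= L.
Proof. intros Hy. apply is_lub_L. now exists y. Qed.

Lemma L_sub_prim_ge a : 0 <= a < 1 -> (1 - a) * integrand a <= L - prim a.
Proof.
  intros Ha. pose proof (integrand_ge_1 a ltac:(lra)) as Hk.
  apply le_epsilon; intros eps Heps.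
  destruct (Rle_dec ((1 - a) * integrand a) eps).
  - pose proof (prim_le_L a Ha). lra.
  - set (b := 1 - eps / integrand a).
    assert (Hb : eps / integrand a < 1 - a).
    { apply Rmult_lt_reg_r with (integrand a); [lra|].
      unfold Rdiv. rewrite Rmult_assoc, Rinv_l by lra. lra. }
    assert (Hb0 : 0 < eps / integrand a) by (apply Rdiv_lt_0_compat; lra).
    pose proof (prim_increment_ge a b ltac:(unfold b; lra) ltac:(unfold b; lra)).
    pose proof (prim_le_L b ltac:(unfold b; lra)).
    replace ((b - a) * integrand a) with ((1 - a) * integrand a - eps) in *
      by (unfold b; field; lra).
    lra.
Qed.

Lemma L_ge_1 : 1 <= L.
Proof.
  pose proof (L_sub_prim_ge 0 ltac:(lra)). pose proof (integrand_ge_1 0 ltac:(lra)).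
  rewrite prim_0 in *. lra.
Qed.

Definition F (y : R) : R := if Rlt_dec y 1 then prim y else L.

Lemma F_lt_1 y : y < 1 -> F y = prim y.
Proof. intros Hy. unfold F. destruct (Rlt_dec y 1); [reflexivity|lra]. Qed.

Lemma F_ge_1 y : 1 <= y -> F y = L.
Proof. intros Hy. unfold F. destruct (Rlt_dec y 1); [lra|reflexivity]. Qed.

Lemma F_0 : F 0 = 0.
Proof. rewrite F_lt_1 by lra. apply prim_0. Qed.

Lemma F_1 : F 1 = L.
Proof. apply F_ge_1, Rle_refl. Qed.

Lemma F_pq_eq_F y : 0 <= y <= 1 -> F_pq (6/5) 2 y = F y.
Proof.
  intros Hy. destruct (Rlt_dec y 1) as [Hy1|Hy1].
  - rewrite F_lt_1 by auto. unfold F_pq. destruct (Rlt_dec y 1); [|lra].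
    apply RInt_ext. intros t Ht. rewrite Rmin_left, Rmax_right in Ht by lra.
    apply integrand_pq_eq; lra.
  - replace y with 1 by lra. now rewrite F_1.
Qed.

Lemma F_increment_ge a b : 0 <= a <= b -> b <= 1 -> b - a <= F b - F a.
Proof.
  intros Ha Hb. destruct (Rlt_dec b 1).
  - rewrite !F_lt_1 by lra. now apply prim_increment_ge_length.
  - rewrite (F_ge_1 b) by lra. destruct (Rlt_dec a 1).
    + rewrite F_lt_1 by lra.
      pose proof (L_sub_prim_ge a ltac:(lra)). pose proof (integrand_ge_1 a ltac:(lra)). nra.
    + rewrite F_ge_1 by lra. lra.
Qed.

Lemma F_inj a b : 0 <= a <= 1 -> 0 <= b <= 1 -> F a = F b -> a = b.
Proof.
  intros Ha Hb E. destruct (Rle_dec a b).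
  - pose proof (F_increment_ge a b). lra.
  - pose proof (F_increment_ge b a). lra.
Qed.

Lemma F_range y : 0 <= y <= 1 -> 0 <= F y <= L.
Proof.
  intros Hy. pose proof (F_increment_ge 0 y). pose proof (F_increment_ge y 1).
  rewrite F_0, F_1 in *. lra.
Qed.

Lemma is_derive_F y : -1 < y < 1 -> is_derive F y (integrand y).
Proof.
  intros Hy. apply (is_derive_ext_loc prim); [|now apply is_derive_prim].
  apply (locally_interval _ y m_infty 1); simpl; try easy; try lra.
  intros z _ Hz. symmetry; now apply F_lt_1.
Qed.

Lemma continuity_pt_F y : -1 < y <= 1 -> continuity_pt F y.
Proof.
  intros Hy. destruct (Rlt_dec y 1).
  - apply ex_derive_continuity_pt. eexists. apply is_derive_F. lra.
  - replace y with 1 by lra. apply continuity_pt_locally; intros eps.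
    destruct (is_lub_approx _ L eps is_lub_L (cond_pos eps)) as [z [[y0 [Hy0 ->]] Hz]].
    apply (locally_interval _ 1 y0 p_infty); simpl; try easy; try lra.
    intros u Hu _. rewrite F_1. destruct (Rlt_dec u 1).
    + rewrite F_lt_1 by lra.
      pose proof (prim_increment_ge_length y0 u ltac:(lra) ltac:(lra)).
      pose proof (prim_le_L u ltac:(lra)). apply Rabs_def1; lra.
    + rewrite F_ge_1, Rminus_diag, Rabs_R0 by lra. apply cond_pos.
Qed.

Lemma F_surj z : 0 <= z <= L -> exists y, 0 <= y <= 1 /\ F y = z.
Proof.
  intros Hz. destruct (Req_dec z 0) as [->|Hz0]; [exists 0; split; [lra|apply F_0]|].
  destruct (Req_dec z L) as [->|HzL]; [exists 1; split; [lra|apply F_1]|].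
  destruct (Ranalysis5.IVT_interv (fun y => F y - z) 0 1) as [y [Hy E]].
  - intros a Ha. apply continuity_pt_minus; [apply continuity_pt_F; lra|apply continuity_pt_const].
    now intros ? ?.
  - lra.
  - rewrite F_0. lra.
  - rewrite F_1. lra.
  - exists y. split; [auto|lra].
Qed.

(** * sin_{6/5,2} and cos_{6/5,2} on [0, pi_{6/5,2}] *)

Lemma sin_pq_base_F y : 0 <= y <= 1 -> sin_pq_base (6/5) 2 (F y) = y.
Proof.
  intros Hy. unfold sin_pq_base.
  destruct (epsilon_spec (inhabits 0) (fun y' => 0 <= y' <= 1 /\ F_pq (6/5) 2 y' = F y))
    as [Hy' E].
  - exists y. split; [auto|]. now apply F_pq_eq_F.
  - rewrite F_pq_eq_F in E by auto. now apply F_inj.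
Qed.

Lemma pi_pq_eq : pi_pq (6/5) 2 = 2 * L.
Proof. reflexivity. Qed.

Lemma sin_pq_eq_half z : 0 <= z < 2 * L -> sin_pq (6/5) 2 z = sin_pq_half (6/5) 2 z.
Proof.
  intros Hz. pose proof L_ge_1. unfold sin_pq. rewrite pi_pq_eq.
  rewrite <- (Int_part_spec _ 0).
  2:{ simpl. split; [|apply Rdiv_le_0_compat]; try lra.
      apply Rlt_minus_l, Rmult_lt_reg_r with (2 * (2 * L)); [lra|].
      unfold Rdiv. rewrite Rmult_assoc, Rinv_l by lra. lra. }
  rewrite Rmult_0_r, Rminus_0_r. destruct (Rle_dec 0 z); [reflexivity|lra].
Qed.

Lemma sin_pq_le_L z : 0 <= z <= L -> sin_pq (6/5) 2 z = sin_pq_base (6/5) 2 z.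
Proof.
  intros Hz. pose proof L_ge_1. rewrite sin_pq_eq_half by lra. unfold sin_pq_half.
  rewrite pi_pq_eq. destruct (Rle_dec z (2 * L / 2)); [reflexivity|lra].
Qed.

Lemma sin_pq_F y : 0 <= y <= 1 -> sin_pq (6/5) 2 (F y) = y.
Proof. intros Hy. rewrite sin_pq_le_L by now apply F_range. now apply sin_pq_base_F. Qed.

Lemma F_sin_pq z : 0 <= z <= L -> 0 <= sin_pq (6/5) 2 z <= 1 /\ F (sin_pq (6/5) 2 z) = z.
Proof. intros Hz. destruct (F_surj z Hz) as [y [Hy <-]]. now rewrite sin_pq_F. Qed.

Lemma sin_pq_ge_L z : L <= z <= 2 * L -> sin_pq (6/5) 2 z = sin_pq_base (6/5) 2 (2 * L - z).
Proof.
  intros Hz. pose proof L_ge_1. destruct (Req_dec z (2 * L)) as [->|Hz2].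
  - unfold sin_pq. rewrite pi_pq_eq, <- (Int_part_spec _ 1).
    2:{ replace ((2 * L + 2 * L) / (2 * (2 * L))) with 1 by (field; lra). simpl; lra. }
    replace (2 * L - 2 * (2 * L) * IZR 1) with (- (2 * L)) by (simpl; ring).
    destruct (Rle_dec 0 (- (2 * L))); [lra|]. unfold sin_pq_half. rewrite pi_pq_eq, Ropp_involutive.
    destruct (Rle_dec (2 * L) (2 * L / 2)); [lra|].
    rewrite Rminus_diag, <- F_0, sin_pq_base_F by lra. lra.
  - rewrite sin_pq_eq_half by lra. unfold sin_pq_half. rewrite pi_pq_eq.
    destruct (Rle_dec z (2 * L / 2)); [|reflexivity].
    replace z with L by lra. f_equal. lra.
Qed.

Lemma sin_pq_reflect z : 0 <= z <= L -> sin_pq (6/5) 2 (2 * L - z) = sin_pq (6/5) 2 z.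
Proof.
  intros Hz. rewrite sin_pq_ge_L, sin_pq_le_L by lra. f_equal. ring.
Qed.

Lemma sin_pq_0 : sin_pq (6/5) 2 0 = 0.
Proof. rewrite <- F_0 at 1. apply sin_pq_F. lra. Qed.

Lemma sin_pq_L : sin_pq (6/5) 2 L = 1.
Proof. rewrite <- F_1. apply sin_pq_F. lra. Qed.

Lemma sin_pq_interior x : 0 < x < L -> 0 < sin_pq (6/5) 2 x < 1.
Proof.
  intros Hx. destruct (F_sin_pq x) as [Hs Es]; [lra|].
  split; apply Rnot_le_lt; intros Hle.
  - replace (sin_pq (6/5) 2 x) with 0 in Es by lra. rewrite F_0 in Es. lra.
  - replace (sin_pq (6/5) 2 x) with 1 in Es by lra. rewrite F_1 in Es. lra.
Qed.

Lemma sin_pq_dist_le z x : 0 <= z <= L -> 0 <= x <= L ->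
  Rabs (sin_pq (6/5) 2 z - sin_pq (6/5) 2 x) <= Rabs (z - x).
Proof.
  intros Hz Hx. destruct (F_sin_pq z Hz) as [Hsz Ez], (F_sin_pq x Hx) as [Hsx Ex].
  set (a := sin_pq (6/5) 2 z) in *; set (b := sin_pq (6/5) 2 x) in *.
  destruct (Rle_dec b a).
  - pose proof (F_increment_ge b a ltac:(lra) ltac:(lra)).
    rewrite !Rabs_right; lra.
  - pose proof (F_increment_ge a b ltac:(lra) ltac:(lra)).
    rewrite Rabs_minus_sym, (Rabs_minus_sym z), !Rabs_right; lra.
Qed.

Lemma continuity_pt_sin_pq x : 0 < x < L -> continuity_pt (sin_pq (6/5) 2) x.
Proof.
  intros Hx. apply continuity_pt_locally; intros eps.
  set (r := Rmin eps (Rmin x (L - x))).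
  assert (Hr : 0 < r) by (repeat apply Rmin_pos; try apply cond_pos; lra).
  assert (r <= eps /\ r <= x /\ r <= L - x) as (Hr1 & Hr2 & Hr3).
  { unfold r. pose proof (Rmin_l eps (Rmin x (L - x))). pose proof (Rmin_r eps (Rmin x (L - x))).
    pose proof (Rmin_l x (L - x)). pose proof (Rmin_r x (L - x)). lra. }
  apply (locally_interval _ x (x - r) (x + r)); simpl; try lra.
  intros z Hz1 Hz2. eapply Rle_lt_trans; [apply sin_pq_dist_le; lra|]. apply Rabs_def1; lra.
Qed.

Lemma cos_pq_interior x : 0 < x < L -> cos_pq (6/5) 2 x = / integrand (sin_pq (6/5) 2 x).
Proof.
  intros Hx. pose proof (sin_pq_interior x Hx). unfold cos_pq. apply is_derive_unique.
  apply (is_derive_inverse F _ 0 L); auto.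
  - intros z Hz. apply F_sin_pq; lra.
  - now apply continuity_pt_sin_pq.
  - apply is_derive_F; lra.
  - apply Rgt_not_eq, integrand_pos.
Qed.

(* With y = sin_pq (L - h):
   h = L - prim y >= (1 - y) (1 - y^2)^(-5/6) >= (1 - y)^(1/6) / 2^(5/6). *)
Lemma one_sub_sin_pq_le h : 0 <= h <= L -> 1 - sin_pq (6/5) 2 (L - h) <= 32 * h ^ 6.
Proof.
  intros Hh. destruct (F_sin_pq (L - h)) as [Hy Ey]; [lra|].
  set (y := sin_pq (6/5) 2 (L - h)) in *.
  destruct (Req_dec y 1) as [E|E]; [rewrite E; pose proof (pow_le h 6); lra|].
  rewrite F_lt_1 in Ey by lra.
  pose proof (L_sub_prim_ge y ltac:(lra)) as Hgap. pose proof (integrand_pos y).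
  assert (H6 : ((1 - y) * integrand y) ^ 6 <= h ^ 6) by (apply pow_incr; split; nra).
  rewrite Rpow_mult_distr, integrand_pow6 in H6 by lra.
  replace (1 - y ^ 2) with ((1 - y) * (1 + y)) in H6 by ring.
  replace ((1 - y) ^ 6 * / ((1 - y) * (1 + y)) ^ 5) with ((1 - y) / (1 + y) ^ 5) in H6
    by (field; lra).
  assert (Hp : 0 < (1 + y) ^ 5 <= 32).
  { split; [apply pow_lt; lra|]. replace 32 with (2 ^ 5) by ring. apply pow_incr; lra. }
  assert (Hq : 1 - y = (1 - y) / (1 + y) ^ 5 * (1 + y) ^ 5) by (field; lra).
  assert (0 <= (1 - y) / (1 + y) ^ 5) by (apply Rdiv_le_0_compat; lra).
  nra.
Qed.

Lemma sin_pq_L_add h : Rabs h <= L -> sin_pq (6/5) 2 (L + h) = sin_pq (6/5) 2 (L - Rabs h).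
Proof.
  intros Hh. destruct (Rcase_abs h) as [Hneg|Hpos].
  - rewrite Rabs_left by auto. f_equal. ring.
  - rewrite Rabs_right in * by auto. rewrite <- (sin_pq_reflect (L - h)) by lra. f_equal. ring.
Qed.

Lemma cos_pq_L : cos_pq (6/5) 2 L = 0.
Proof.
  pose proof L_ge_1. unfold cos_pq. apply is_derive_unique, is_derive_Reals.
  intros eps Heps. assert (Hd : 0 < Rmin 1 (eps / 32)) by (apply Rmin_pos; lra).
  exists (mkposreal _ Hd); intros h Hh0 Hh; simpl in Hh. apply Rmin_Rgt in Hh as [Hh1 Hh2].
  pose proof (Rabs_pos_lt h Hh0) as Ha.
  rewrite sin_pq_L, sin_pq_L_add, Rminus_0_r by lra.
  destruct (F_sin_pq (L - Rabs h)) as [Hs _]; [lra|].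
  pose proof (one_sub_sin_pq_le (Rabs h) ltac:(lra)).
  set (S := sin_pq (6/5) 2 (L - Rabs h)) in *.
  unfold Rdiv. rewrite Rabs_mult, Rabs_inv, Rabs_left1 by lra.
  apply (Rmult_lt_reg_r (Rabs h)); [lra|]. rewrite Rmult_assoc, Rinv_l, Rmult_1_r by lra.
  assert (Rabs h ^ 4 <= 1) by (rewrite <- (pow1 4); apply pow_incr; lra).
  assert (0 <= Rabs h ^ 2) by apply pow2_ge_0.
  replace (Rabs h ^ 6) with (Rabs h ^ 2 * Rabs h ^ 4) in * by ring.
  nra.
Qed.

Lemma sin_pq_sq_mul_cos_pq_pow x : 0 <= x <= L ->
  sin_pq (6/5) 2 x ^ 2 * rpow (cos_pq (6/5) 2 x) (2/5)
  = sin_pq (6/5) 2 x ^ 2 * rpow (1 - sin_pq (6/5) 2 x ^ 2) (1/3).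
Proof.
  intros Hx. destruct (Req_dec x 0) as [->|Hx0]; [rewrite sin_pq_0; ring|].
  destruct (Req_dec x L) as [->|HxL].
  { rewrite cos_pq_L, sin_pq_L. unfold rpow. replace (1 - 1 ^ 2) with 0 by ring.
    destruct (Rlt_dec 0 0); [lra|reflexivity]. }
  pose proof (sin_pq_interior x ltac:(lra)) as Hs.
  rewrite cos_pq_interior by lra. f_equal. unfold rpow.
  set (s := sin_pq (6/5) 2 x) in *.
  destruct (Rlt_dec 0 (1 - s ^ 2)); [|nra].
  destruct (Rlt_dec 0 (/ integrand s)) as [Hp|Hp];
    [|exfalso; apply Hp, Rinv_0_lt_compat, integrand_pos].
  unfold integrand. rewrite Rpower_Ropp, Rinv_inv, Rpower_mult. f_equal. field.
Qed.

(** * The duplication map *)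

Definition dup_w (u : R) : R := 2 * u ^ 2 + 2 * u - 1.
Definition dup_D (u : R) : R := -8 * u ^ 4 + 8 * u ^ 3 + 8 * u + 1.
Definition dup_K (u : R) : R := 6 * (1 + 2 * u + 6 * u ^ 2 - 4 * u ^ 3 + 4 * u ^ 4).
Definition dup (u : R) : R := dup_w u ^ 2 / dup_D u.
Definition dup' (u : R) : R := 2 * dup_w u * dup_K u / dup_D u ^ 2.
Definition u_star : R := (sqrt 3 - 1) / 2.

Lemma one_sub_dup_cube_poly u : dup_D u ^ 3 - dup_w u ^ 6 = u * (1 - u ^ 3) * dup_K u ^ 2.
Proof. unfold dup_D, dup_w, dup_K. ring. Qed.

Lemma dup_D_sub_w_sq u : dup_D u - dup_w u ^ 2 = 12 * (u - u ^ 4).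
Proof. unfold dup_D, dup_w. ring. Qed.

Lemma pow3_range u : 0 <= u <= 1 -> 0 <= u ^ 3 <= 1.
Proof. intros Hu. split; [apply pow_le; lra|rewrite <- (pow1 3); apply pow_incr; lra]. Qed.

Lemma pow3_range_open u : 0 < u < 1 -> 0 < u ^ 3 < 1.
Proof.
  intros Hu. split; [apply pow_lt; lra|].
  exact (proj2 (pow_lt_1_compat u 3 ltac:(lra) (Nat.lt_0_succ 2))).
Qed.

Lemma pow4_le u : 0 <= u <= 1 -> u ^ 4 <= u.
Proof.
  intros Hu. pose proof (pow3_range u Hu).
  replace (u ^ 4) with (u * u ^ 3) by ring. nra.
Qed.

Lemma dup_D_ge_1 u : 0 <= u <= 1 -> 1 <= dup_D u.
Proof.
  intros Hu. pose proof (pow4_le u Hu). pose proof (pow3_range u Hu).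
  unfold dup_D. lra.
Qed.

Lemma dup_K_pos u : 0 <= u <= 1 -> 0 < dup_K u.
Proof. intros Hu. unfold dup_K. nra. Qed.

Lemma dup_range u : 0 <= u <= 1 -> 0 <= dup u <= 1.
Proof.
  intros Hu. pose proof (dup_D_ge_1 u Hu). pose proof (pow4_le u Hu). unfold dup. split.
  - apply Rdiv_le_0_compat; [apply pow2_ge_0|lra].
  - apply (Rdiv_le_1 _ (dup_D u)); [lra|]. pose proof (dup_D_sub_w_sq u). lra.
Qed.

Lemma dup_lt_1 u : 0 < u < 1 -> dup u < 1.
Proof.
  intros Hu. pose proof (dup_D_ge_1 u ltac:(lra)). unfold dup.
  apply (Rdiv_lt_1 _ (dup_D u)); [lra|]. pose proof (dup_D_sub_w_sq u).
  pose proof (pow3_range_open u Hu).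
  assert (u ^ 4 < u) by (replace (u ^ 4) with (u * u ^ 3) by ring; nra). lra.
Qed.

Lemma dup_1 : dup 1 = 1.
Proof. unfold dup, dup_w, dup_D. field. Qed.

Lemma u_star_range : 0 < u_star < 1.
Proof.
  assert (E : sqrt 3 * sqrt 3 = 3) by (apply sqrt_sqrt; lra).
  pose proof (sqrt_pos 3). unfold u_star. split; nra.
Qed.

Lemma dup_w_factor u : dup_w u = 2 * (u - u_star) * (u + u_star + 1).
Proof.
  assert (E : sqrt 3 * sqrt 3 = 3) by (apply sqrt_sqrt; lra).
  unfold dup_w, u_star. nra.
Qed.

Lemma dup_w_pos u : u_star < u -> 0 < dup_w u.
Proof. intros Hu. rewrite dup_w_factor. pose proof u_star_range. nra. Qed.

Lemma dup_w_neg u : 0 <= u < u_star -> dup_w u < 0.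
Proof. intros Hu. rewrite dup_w_factor. pose proof u_star_range. nra. Qed.

Lemma dup_u_star : dup u_star = 0.
Proof. unfold dup. rewrite dup_w_factor. unfold Rdiv. ring. Qed.

Lemma dup_pos u : 0 <= u <= 1 -> u <> u_star -> 0 < dup u.
Proof.
  intros Hu Hne. pose proof (dup_D_ge_1 u Hu). unfold dup.
  apply Rdiv_lt_0_compat; [|lra]. apply pow2_gt_0. rewrite dup_w_factor.
  pose proof u_star_range. apply Rmult_integral_contrapositive; split; [|lra].
  apply Rmult_integral_contrapositive; split; lra.
Qed.

Lemma is_derive_dup u : 0 <= u <= 1 -> is_derive dup u (dup' u).
Proof.
  intros Hu. pose proof (dup_D_ge_1 u Hu). unfold dup, dup', dup_w, dup_D, dup_K in *.
  auto_derive; [lra|]. field. lra.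
Qed.

(** * The elliptic integral G and its duplication *)

Definition G (u : R) : R := F (sqrt (1 - u ^ 3)).
Definition G' (u : R) : R := -3 / (2 * sqrt u * sqrt (1 - u ^ 3)).

Lemma sqrt_one_sub_cube_range u : 0 <= u <= 1 -> 0 <= sqrt (1 - u ^ 3) <= 1.
Proof.
  intros Hu. pose proof (pow3_range u Hu).
  split; [apply sqrt_pos|]. rewrite <- sqrt_1 at 2. apply sqrt_le_1_alt. lra.
Qed.

Lemma G_0 : G 0 = L.
Proof. unfold G. rewrite pow_i, Rminus_0_r, sqrt_1 by auto. apply F_1. Qed.

Lemma G_1 : G 1 = 0.
Proof. unfold G. rewrite pow1, Rminus_diag, sqrt_0. apply F_0. Qed.

Lemma integrand_sqrt_one_sub_cube u : 0 < u <= 1 ->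
  integrand (sqrt (1 - u ^ 3)) = / (u ^ 2 * sqrt u).
Proof.
  intros Hu. pose proof (pow3_range u ltac:(lra)).
  unfold integrand. rewrite pow2_sqrt by lra. replace (1 - (1 - u ^ 3)) with (u ^ 3) by ring.
  rewrite <- (Rpower_pow 3), Rpower_mult by lra.
  replace (INR 3 * - (5 / 6)) with (- (INR 2 + / 2)) by (simpl; field).
  now rewrite Rpower_Ropp, Rpower_plus, Rpower_pow, Rpower_sqrt by lra.
Qed.

Lemma is_derive_G u : 0 < u < 1 -> is_derive G u (G' u).
Proof.
  intros Hu. pose proof (pow3_range_open u Hu).
  assert (Hs : 0 < sqrt (1 - u ^ 3)) by (apply sqrt_lt_R0; lra).
  assert (Hs1 : sqrt (1 - u ^ 3) < 1) by (rewrite <- sqrt_1 at 2; apply sqrt_lt_1_alt; lra).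
  pose proof (sqrt_lt_R0 u ltac:(lra)).
  assert (Hd : is_derive (fun v => sqrt (1 - v ^ 3)) u (-3 * u ^ 2 / (2 * sqrt (1 - u ^ 3)))).
  { auto_derive; [lra|]. replace (1 + - (u * (u * (u * 1)))) with (1 - u ^ 3) by ring.
    field. lra. }
  pose proof (is_derive_comp F _ u _ _ (is_derive_F (sqrt (1 - u ^ 3)) ltac:(lra)) Hd) as Hc.
  replace (G' u) with (-3 * u ^ 2 / (2 * sqrt (1 - u ^ 3)) * integrand (sqrt (1 - u ^ 3)));
    [exact Hc|].
  rewrite integrand_sqrt_one_sub_cube by lra. unfold G'. field. lra.
Qed.

Lemma continuity_pt_G u : 0 <= u <= 1 -> continuity_pt G u.
Proof.
  intros Hu. apply (continuity_pt_comp (fun v => sqrt (1 - v ^ 3)) F).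
  - apply (continuity_pt_comp (fun v => 1 - v ^ 3) sqrt).
    + apply ex_derive_continuity_pt. auto_derive. exact I.
    + apply continuity_pt_sqrt. pose proof (pow3_range u Hu). lra.
  - apply continuity_pt_F. pose proof (sqrt_one_sub_cube_range u Hu). lra.
Qed.

Lemma continuity_pt_G_dup u : 0 <= u <= 1 -> continuity_pt (fun v => G (dup v)) u.
Proof.
  intros Hu. apply (continuity_pt_comp dup G).
  - apply ex_derive_continuity_pt. eexists. now apply is_derive_dup.
  - now apply continuity_pt_G, dup_range.
Qed.

Lemma sqrt_dup u : 0 <= u <= 1 -> sqrt (dup u) = Rabs (dup_w u) / sqrt (dup_D u).
Proof.
  intros Hu. pose proof (dup_D_ge_1 u Hu).
  assert (Hc : 0 < sqrt (dup_D u)) by (apply sqrt_lt_R0; lra).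
  rewrite <- (sqrt_pow2 (Rabs (dup_w u) / sqrt (dup_D u))).
  - f_equal. unfold dup, Rdiv. rewrite Rpow_mult_distr, pow2_abs, pow_inv, pow2_sqrt by lra.
    reflexivity.
  - apply Rdiv_le_0_compat; [apply Rabs_pos|lra].
Qed.

Lemma sqrt_one_sub_dup_cube u : 0 <= u <= 1 ->
  sqrt (1 - dup u ^ 3) = sqrt u * sqrt (1 - u ^ 3) * dup_K u / sqrt (dup_D u) ^ 3.
Proof.
  intros Hu. pose proof (dup_D_ge_1 u Hu). pose proof (dup_K_pos u Hu).
  pose proof (pow3_range u Hu).
  assert (Hc : 0 < sqrt (dup_D u)) by (apply sqrt_lt_R0; lra).
  rewrite <- (sqrt_pow2 (sqrt u * sqrt (1 - u ^ 3) * dup_K u / sqrt (dup_D u) ^ 3)).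
  - f_equal. unfold Rdiv. rewrite !Rpow_mult_distr, pow_inv, !pow2_sqrt by lra.
    replace ((sqrt (dup_D u) ^ 3) ^ 2) with ((sqrt (dup_D u) ^ 2) ^ 3) by ring.
    rewrite pow2_sqrt by lra.
    unfold dup. rewrite <- one_sub_dup_cube_poly. field. lra.
  - apply Rdiv_le_0_compat; [|apply pow_lt; lra].
    apply Rmult_le_pos; [apply Rmult_le_pos; apply sqrt_pos|lra].
Qed.

(* [dup' u * G' (dup u) = 2 G' u * sign (dup_w u)]: by [sqrt_dup] and [sqrt_one_sub_dup_cube]
   all square roots of [D] cancel. *)
Lemma is_derive_G_dup u : 0 < u < 1 -> u <> u_star ->
  is_derive (fun v => G (dup v)) u (2 * G' u * (dup_w u / Rabs (dup_w u))).
Proof.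
  intros Hu Hne. pose proof (dup_D_ge_1 u ltac:(lra)). pose proof (dup_K_pos u ltac:(lra)).
  pose proof (dup_pos u ltac:(lra) Hne). pose proof (dup_lt_1 u Hu).
  pose proof (is_derive_comp G dup u _ _ (is_derive_G (dup u) ltac:(lra))
    (is_derive_dup u ltac:(lra))) as Hc.
  replace (2 * G' u * (dup_w u / Rabs (dup_w u))) with (dup' u * G' (dup u)); [exact Hc|].
  assert (Hw : 0 < Rabs (dup_w u)).
  { apply Rabs_pos_lt. intros Hw. apply Hne. rewrite dup_w_factor in Hw.
    pose proof u_star_range. nra. }
  pose proof (pow3_range_open u Hu).
  assert (Ha : 0 < sqrt u) by (apply sqrt_lt_R0; lra).
  assert (Hb : 0 < sqrt (1 - u ^ 3)) by (apply sqrt_lt_R0; lra).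
  assert (Hc2 : 0 < sqrt (dup_D u)) by (apply sqrt_lt_R0; lra).
  unfold G' at 1. rewrite sqrt_dup, sqrt_one_sub_dup_cube by lra. unfold G', dup'.
  assert (HD : dup_D u = sqrt (dup_D u) ^ 2) by (rewrite pow2_sqrt; lra).
  set (c := sqrt (dup_D u)) in *. rewrite HD. field. repeat split; lra.
Qed.

Lemma G_dup_ge u : u_star <= u <= 1 -> G (dup u) = 2 * G u.
Proof.
  intros Hu. pose proof u_star_range.
  enough (E : G (dup u) - 2 * G u = G (dup 1) - 2 * G 1)
    by (rewrite dup_1, G_1 in E; lra).
  apply (is_derive_0_eq (fun v => G (dup v) - 2 * G v)); [lra| |].
  - intros v Hv. assert (Hw : 0 < dup_w v) by (apply dup_w_pos; lra).
    replace 0 with (2 * G' v * (dup_w v / Rabs (dup_w v)) - 2 * G' v)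
      by (rewrite Rabs_right by lra; field; lra).
    apply (is_derive_minus (fun v => G (dup v)) (fun v => 2 * G v)).
    + apply is_derive_G_dup; lra.
    + apply (is_derive_scal G v 2), is_derive_G. lra.
  - intros v Hv. apply continuity_pt_minus; [apply continuity_pt_G_dup; lra|].
    apply continuity_pt_scal, continuity_pt_G. lra.
Qed.

Lemma L_eq_2_G_u_star : L = 2 * G u_star.
Proof. pose proof u_star_range. rewrite <- G_dup_ge by lra. now rewrite dup_u_star, G_0. Qed.

Lemma G_dup_le u : 0 <= u <= u_star -> G (dup u) = 2 * L - 2 * G u.
Proof.
  intros Hu. pose proof u_star_range.
  enough (E : G (dup u) + 2 * G u = G (dup u_star) + 2 * G u_star)
    by (rewrite dup_u_star, G_0 in E; pose proof L_eq_2_G_u_star; lra).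
  apply (is_derive_0_eq (fun v => G (dup v) + 2 * G v)); [lra| |].
  - intros v Hv. assert (Hw : dup_w v < 0) by (apply dup_w_neg; lra).
    replace 0 with (2 * G' v * (dup_w v / Rabs (dup_w v)) + 2 * G' v)
      by (rewrite Rabs_left by lra; field; lra).
    apply (is_derive_plus (fun v => G (dup v)) (fun v => 2 * G v)).
    + apply is_derive_G_dup; lra.
    + apply (is_derive_scal G v 2), is_derive_G. lra.
  - intros v Hv. apply continuity_pt_plus; [apply continuity_pt_G_dup; lra|].
    apply continuity_pt_scal, continuity_pt_G. lra.
Qed.

Lemma sin_pq_double_G u : 0 <= u <= 1 -> sin_pq (6/5) 2 (2 * G u) = sqrt (1 - dup u ^ 3).
Proof.
  intros Hu. pose proof (sqrt_one_sub_cube_range (dup u) (dup_range u Hu)) as HS.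
  assert (HGS : G (dup u) = F (sqrt (1 - dup u ^ 3))) by reflexivity.
  destruct (Rle_dec u_star u).
  - rewrite <- G_dup_ge, HGS by lra. now apply sin_pq_F.
  - replace (2 * G u) with (2 * L - F (sqrt (1 - dup u ^ 3))) by (rewrite <- HGS, G_dup_le; lra).
    rewrite sin_pq_reflect by now apply F_range. now apply sin_pq_F.
Qed.

Lemma rpow_third_cube a : 0 <= a -> rpow a (1/3) ^ 3 = a.
Proof.
  intros Ha. unfold rpow. destruct (Rlt_dec 0 a).
  - rewrite <- Rpower_pow, Rpower_mult by apply exp_pos.
    replace (1 / 3 * INR 3) with 1 by (simpl; field). now apply Rpower_1.
  - simpl. lra.
Qed.

Lemma rpow_third_range a : 0 <= a <= 1 -> 0 <= rpow a (1/3) <= 1.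
Proof.
  intros Ha. pose proof (rpow_third_cube a ltac:(lra)) as E.
  assert (0 <= rpow a (1/3)) by (unfold rpow; destruct (Rlt_dec 0 a); [left; apply exp_pos|lra]).
  split; [auto|]. apply Rnot_lt_le; intros Hgt.
  set (c := rpow a (1/3)) in *. assert (1 < c * c) by nra.
  replace (c ^ 3) with (c * c * c) in E by ring. nra.
Qed.

Lemma G_cbrt_sin_pq x : 0 <= x <= L -> G (rpow (1 - sin_pq (6/5) 2 x ^ 2) (1/3)) = x.
Proof.
  intros Hx. destruct (F_sin_pq x Hx) as [Hs Es]. unfold G.
  rewrite rpow_third_cube by nra.
  replace (1 - (1 - sin_pq (6/5) 2 x ^ 2)) with (sin_pq (6/5) 2 x ^ 2) by ring.
  now rewrite sqrt_pow2 by lra.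
Qed.

Theorem theorem1p2 :
  forall x : R, 0 <= x <= pi_pq (6/5) 2 / 2 ->
    sin_pq (6/5) 2 (2 * x) =
    sqrt (1 - ((9 - 8 * (sin_pq (6/5) 2 x) ^ 2
                  - 4 * (sin_pq (6/5) 2 x) ^ 2 * rpow (cos_pq (6/5) 2 x) (2/5))
               / (9 - 8 * (sin_pq (6/5) 2 x) ^ 2
                  + 8 * (sin_pq (6/5) 2 x) ^ 2 * rpow (cos_pq (6/5) 2 x) (2/5))) ^ 3).
Proof.
  intros x Hx. rewrite pi_pq_eq in Hx. assert (HxL : 0 <= x <= L) by lra.
  pose proof (sin_pq_sq_mul_cos_pq_pow x HxL) as Hc.
  destruct (F_sin_pq x HxL) as [Hs _].
  rewrite <- (G_cbrt_sin_pq x HxL) at 1.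
  set (s := sin_pq (6/5) 2 x) in *. set (u := rpow (1 - s ^ 2) (1/3)) in *.
  pose proof (rpow_third_range (1 - s ^ 2) ltac:(nra)) as Hu. fold u in Hu.
  pose proof (rpow_third_cube (1 - s ^ 2) ltac:(nra)) as Hu3. fold u in Hu3.
  set (c := rpow (cos_pq (6/5) 2 x) (2/5)) in *.
  replace ((9 - 8 * s ^ 2 - 4 * s ^ 2 * c) / (9 - 8 * s ^ 2 + 8 * s ^ 2 * c)) with (dup u).
  - now apply sin_pq_double_G.
  - rewrite !(Rmult_assoc _ (s ^ 2)), Hc. unfold dup, dup_w, dup_D.
    replace (s ^ 2) with (1 - u ^ 3) by lra. f_equal; ring.
Qed.
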